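(* Let $K$ be a number field and let $E\subset\mathbb{P}^2$ be the elliptic curve given by the Weierstrass equation $y^2=x^3+ax+b$ with $a,b\in K$, $4a^3+27b^2\neq0$. Let $h(t)\in K[t]$ be a polynomial of degree at least $2$, put $H(t)=h(t)+ah(t)^3+bh(t)^4\in K[t]$, and let $C$ be the projective curve defined by $s^2=H(t)$. Assume that $C$ is smooth (for example when $H(t)$ is separable). Then there exists a non-constant morphism of algebraic curves $\phi:C\to E$.
   Context: For $H\in K[t]$ of degree $n=2g+1>4$ or $n=2g+2>4$, the projective curve defined by $s^2=H(t)$ is obtained by gluing the affine curves $s^2=H(t)$ and $s'^2=t'^{2g+2}H(1/t')$ along $t\neq0$, $t'\neq0$ via $t'=1/t$, $s'=t^{-g-1}s$. When $H$ is separable it is a smooth projective hyperelliptic curve of genus $g\geq2$, with a double cover $\gamma:C\to\mathbb{P}^1$, $(s,t)\mapsto t$. *)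

(* Algebraic points are taken in algC (an algebraic closure
   of Q); the number field K is a subfield of algC. *)
From mathcomp Require Import all_boot all_order all_algebra all_field.
Set Implicit Arguments. Unset Strict Implicit. Unset Printing Implicit Defensive.
Import Order.TTheory GRing.Theory Num.Theory.
Local Open Scope ring_scope.

Definition is_number_field (K : {pred algC}) : Prop :=
  [/\ 0 \in K, 1 \in K,
      {in K &, forall x y, x - y \in K},
      {in K &, forall x y, x * y \in K} &
      {in K, forall x, x^-1 \in K}] /\

      exists s : seq algC, all (mem K) s /\
        forall x, x \in K -> exists c : seq rat,
          size c = size s /\ x = \sum_(i < size s) ratr c`_i * s`_i.

(* points of P^2 given by homogeneous coordinates (X, Y, Z) *)
Definition pt3 := (algC * algC * algC)%type.
Definition nz3 (p : pt3) : bool := ~~ [&& p.1.1 == 0, p.1.2 == 0 & p.2 == 0].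
Definition prop3 (p q : pt3) : Prop :=
  exists2 c : algC, c != 0 & q = (c * p.1.1, c * p.1.2, c * p.2).
Definition onE (a b : algC) (p : pt3) : bool :=
  p.1.2 ^+ 2 * p.2 == p.1.1 ^+ 3 + a * p.1.1 * p.2 ^+ 2 + b * p.2 ^+ 3.

(* hyperelliptic curve s^2 = H(t), deg H = n = 2g+1 or 2g+2 *)
Definition hyp_g (H : {poly algC}) : nat := ((size H).-1.-1)./2.
(* t'^(2g+2) H(1/t') *)
Definition hyp_rev (H : {poly algC}) : {poly algC} :=
  \poly_(i < (hyp_g H).*2.+3) H`_((hyp_g H).*2.+2 - i).

(* points of the two affine charts: (false,(t,s)) in s^2 = H(t),
   (true,(t',s')) in s'^2 = t'^(2g+2) H(1/t') *)
Definition cpre := (bool * (algC * algC))%type.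
Definition onC (H : {poly algC}) (P : cpre) : bool :=
  if P.1 then P.2.2 ^+ 2 == (hyp_rev H).[P.2.1] else P.2.2 ^+ 2 == H.[P.2.1].

(* Jacobian criterion for the affine plane curve s^2 = P(t) *)
Definition smooth_chart (P : {poly algC}) : Prop :=
  forall t s : algC, s ^+ 2 = P.[t] -> (2 * s != 0) \/ (P^`().[t] != 0).
Definition hyp_smooth (H : {poly algC}) : Prop :=
  smooth_chart H /\ smooth_chart (hyp_rev H).

(* bivariate polynomials in (u, v) = chart coordinates; coefficients in K *)
Definition ev2 (F : {poly {poly algC}}) (u v : algC) : algC := (F.[v%:P]).[u].
Definition over2 (K : {pred algC}) (F : {poly {poly algC}}) : bool :=
  all (fun q : {poly algC} => all (mem K) q) F.
Definition ev3 (F0 F1 F2 : {poly {poly algC}}) (u v : algC) : pt3 :=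
  (ev2 F0 u v, ev2 F1 u v, ev2 F2 u v).

(* phi : C -> E is a morphism defined over K: it lands in E, is compatible
   with the gluing t' = 1/t, s' = t^(-g-1) s, and is locally (on an open
   subset of a chart) given by [F0 : F1 : F2] with F_i in K[u,v]. *)
Definition hyp_morphism_to_E (K : {pred algC}) (a b : algC) (H : {poly algC})
    (phi : cpre -> pt3) : Prop :=
  [/\ (forall P, onC H P -> nz3 (phi P) /\ onE a b (phi P)),
      (forall t s t' s' : algC, onC H (false, (t, s)) -> t != 0 ->
          t' = t^-1 -> s' = t ^- (hyp_g H).+1 * s ->
          prop3 (phi (false, (t, s))) (phi (true, (t', s')))) &
      (forall P, onC H P -> exists F0 F1 F2 : {poly {poly algC}},
          [/\ over2 K F0, over2 K F1, over2 K F2,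
              nz3 (ev3 F0 F1 F2 P.2.1 P.2.2) &
              forall Q, onC H Q -> Q.1 = P.1 -> nz3 (ev3 F0 F1 F2 Q.2.1 Q.2.2) ->
                prop3 (ev3 F0 F1 F2 Q.2.1 Q.2.2) (phi Q)])].

Definition hyp_nonconstant (H : {poly algC}) (phi : cpre -> pt3) : Prop :=
  exists P Q, [/\ onC H P, onC H Q & ~ prop3 (phi P) (phi Q)].

(* Since H = h (1 + a h^2 + b h^3), the point (x, y) = (1/h, s/h^2) of the
   curve s^2 = H(t) satisfies y^2 = x^3 + a x + b, so phi(t, s) = [h : s : h^2]
   maps C to E.  In the chart at infinity, with k(t') = t'^d h(1/t') the
   reversed polynomial (d = deg h), the same map reads [t'^d k : t'^e s' : k^2]
   with e = 2d - g - 1 >= 0.  Both are instances of (u, s) |-> [q p : r s : p^2]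
   for polynomials p, q, r; at the zeros of p one multiplies through by s/p to
   get a formula that does not vanish there.  A root of h is sent to the origin
   [0 : 1 : 0] of E and a non-root to an affine point, so phi is not constant. *)

From HB Require Import structures.
From mathcomp Require Import all_boot all_order all_algebra all_field.
From mathcomp Require Import ring zify.
Set Implicit Arguments.
Unset Strict Implicit.
Unset Printing Implicit Defensive.
Import GRing.Theory Num.Theory.
Local Open Scope ring_scope.

Lemma horner_rev (R : fieldType) (p : {poly R}) (N : nat) (x : R) :
  (size p <= N.+1)%N -> x != 0 ->
  (\poly_(i < N.+1) p`_(N - i)).[x] = x ^+ N * p.[x^-1].
Proof.
move=> sp x0; rewrite horner_poly (horner_coef_wide _ sp) mulr_sumr.
rewrite (reindex_inj rev_ord_inj) /=; apply: eq_bigr => i _.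
have iN : (i <= N)%N by rewrite -ltnS.
rewrite subKn // mulrCA; congr (_ * _).
have -> : x ^+ N = x ^+ (N - i) * x ^+ i by rewrite -exprD subnK.
by rewrite exprVn mulrK // unitfE expf_neq0.
Qed.

Lemma poly_neq0_nonroot (R : numDomainType) (p : {poly R}) :
  p != 0 -> exists2 x, x != 0 & p.[x] != 0.
Proof.
move=> p0; pose rs := [seq i.+1%:R : R | i <- iota 0 (size p)].
have rs_uniq : uniq rs.
  by rewrite map_inj_uniq ?iota_uniq // => i j /eqP; rewrite eqr_nat => /eqP [].
have /hasP [_ /mapP [i _ ->] nroot] : has (predC (root p)) rs.
  rewrite has_predC; apply/negP => roots_rs.
  by have := max_poly_roots p0 roots_rs rs_uniq; rewrite size_map size_iota ltnn.
by exists i.+1%:R; rewrite ?pnatr_eq0.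
Qed.

Lemma poly_eq_horner_nonzero (R : numDomainType) (p q : {poly R}) :
  (forall x, x != 0 -> p.[x] = q.[x]) -> p = q.
Proof.
move=> Epq; apply/subr0_eq/eqP; apply: contraT => /poly_neq0_nonroot [x x0].
by rewrite /root hornerD hornerN Epq // subrr eqxx.
Qed.

Lemma leq_size_hyp_g (H : {poly algC}) : ((size H).-1 <= (hyp_g H).+1 * 2)%N.
Proof. rewrite /hyp_g -divn2; lia. Qed.

Lemma leq_hyp_g_size (H : {poly algC}) : (1 < size H)%N -> ((hyp_g H).+1 * 2 <= size H)%N.
Proof. rewrite /hyp_g -divn2; lia. Qed.

Lemma horner_hyp_rev (H : {poly algC}) (x : algC) :
  x != 0 -> (hyp_rev H).[x] = x ^+ ((hyp_g H).+1 * 2) * H.[x^-1].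
Proof.
move=> x0; rewrite /hyp_rev horner_rev //; first by rewrite mulnC mul2n doubleS.
by have := leq_size_hyp_g H; rewrite -mul2n; move: (size H) => n; lia.
Qed.

Lemma ev2C (p : {poly algC}) u v : ev2 p%:P u v = p.[u].
Proof. by rewrite /ev2 hornerC. Qed.

Lemma ev2X u v : ev2 'X u v = v.
Proof. by rewrite /ev2 hornerX hornerC. Qed.

Lemma ev2M F G u v : ev2 (F * G) u v = ev2 F u v * ev2 G u v.
Proof. by rewrite /ev2 !hornerM. Qed.

Lemma over2_polyOver (K : {pred algC}) (F : {poly {poly algC}}) :
  F \is a polyOver (polyOver_pred K) -> over2 K F.
Proof. by []. Qed.

Definition pt_infty : pt3 := (0, 1, 0).

Lemma nz3_infty : nz3 pt_infty.
Proof. by rewrite /nz3 /= oner_eq0 andbF. Qed.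

Lemma onE_infty a b : onE a b pt_infty.
Proof. by rewrite /onE /=; apply/eqP; ring. Qed.

Lemma nz3_z (p : pt3) : p.2 != 0 -> nz3 p.
Proof. by rewrite /nz3 => /negbTE ->; rewrite !andbF. Qed.

Lemma prop3_scale (c : algC) (p q : pt3) : c != 0 ->
  q.1.1 = c * p.1.1 -> q.1.2 = c * p.1.2 -> q.2 = c * p.2 -> prop3 p q.
Proof. by case: q => [[x y] z] /= c0 -> -> ->; exists c. Qed.

Lemma prop3_infty_z (p : pt3) : prop3 pt_infty p -> p.2 = 0.
Proof. by case=> c _ ->; rewrite /= mulr0. Qed.

Section ChartMap.

Variables (a b : algC) (p q r P W : {poly algC}).

Hypothesis chart_div : forall u, p.[u] * W.[u] = r.[u] * P.[u].
Hypothesis chart_cubic : forall u,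
  r.[u] * W.[u] = q.[u] ^+ 3 + a * q.[u] * p.[u] ^+ 2 + b * p.[u] ^+ 3.
Hypothesis chart_coprime : forall u, p.[u] = 0 -> q.[u] != 0.

(* In affine coordinates this is (x, y) = (q/p, r s/p^2); the two hypotheses
   give r^2 P = p (q^3 + a q p^2 + b p^3), the Weierstrass equation with
   denominators cleared. *)
Definition chart_map (u s : algC) : pt3 :=
  if p.[u] == 0 then pt_infty else (q.[u] * p.[u], r.[u] * s, p.[u] ^+ 2).

Lemma chart_eq u : r.[u] ^+ 2 * P.[u] =
  p.[u] * (q.[u] ^+ 3 + a * q.[u] * p.[u] ^+ 2 + b * p.[u] ^+ 3).
Proof. by rewrite expr2 -mulrA -chart_div mulrCA chart_cubic. Qed.

Lemma chart_map_onE u s : s ^+ 2 = P.[u] ->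
  nz3 (chart_map u s) /\ onE a b (chart_map u s).
Proof.
move=> hs; rewrite /chart_map; case: eqP => [_ | /eqP pu0].
  by split; [exact: nz3_infty | exact: onE_infty].
split; first by apply: nz3_z; rewrite expf_neq0.
by rewrite /onE /=; apply/eqP; rewrite exprMn hs chart_eq; ring.
Qed.

Lemma chart_zero u s : s ^+ 2 = P.[u] -> p.[u] = 0 -> W.[u] != 0 /\ s = 0.
Proof.
move=> hs pu0; have rW : r.[u] * W.[u] = q.[u] ^+ 3 by rewrite chart_cubic pu0; ring.
have : r.[u] * W.[u] != 0 by rewrite rW expf_neq0 ?chart_coprime.
rewrite mulf_eq0 negb_or => /andP [ru0 Wu0]; split => //.
have /eqP := chart_div u; rewrite pu0 mul0r -hs eq_sym mulf_eq0 (negbTE ru0).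
by rewrite expf_eq0 /= => /eqP.
Qed.

Definition chart_rep (F0 F1 F2 : {poly {poly algC}}) : Prop :=
  forall u s, s ^+ 2 = P.[u] -> nz3 (ev3 F0 F1 F2 u s) ->
    prop3 (ev3 F0 F1 F2 u s) (chart_map u s).

Lemma chart_rep_generic : chart_rep (q%:P * p%:P) (r%:P * 'X) (p%:P * p%:P).
Proof.
move=> u s hs; rewrite /ev3 !(ev2C, ev2X, ev2M) -expr2 /chart_map.
case: eqP => [pu0 | _] nzF.
  have [_ s0] := chart_zero hs pu0.
  by move: nzF; rewrite /nz3 /= pu0 s0 !mulr0 expr2 mulr0 eqxx.
by apply: (prop3_scale (c := 1)); rewrite ?oner_eq0 ?mul1r.
Qed.

Lemma chart_rep_zero : chart_rep (q%:P * 'X) W%:P (p%:P * 'X).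
Proof.
move=> u s hs; rewrite /ev3 !(ev2C, ev2X, ev2M) /chart_map.
case: eqP => [pu0 | /eqP pu0] nzF.
  have [Wu0 s0] := chart_zero hs pu0.
  by apply: (prop3_scale (c := W.[u]^-1)); rewrite /= ?invr_eq0 ?mulVf // s0 !mulr0.
have s0 : s != 0.
  apply: contraNneq nzF => s0; have /eqP := chart_div u.
  rewrite -hs s0 expr2 !mulr0 mulf_eq0 (negbTE pu0) /= => /eqP Wu0.
  by rewrite Wu0 !eqxx.
apply: (prop3_scale (c := p.[u] / s)); rewrite /= ?mulf_neq0 ?invr_eq0 //.
- by rewrite mulrCA divfK.
- by rewrite mulrAC chart_div -hs expr2 mulrA mulfK.
- by rewrite mulrCA divfK // expr2.
Qed.

Variable K : subringClosed algC.
Hypotheses (pK : p \is a polyOver K) (qK : q \is a polyOver K)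
  (rK : r \is a polyOver K) (WK : W \is a polyOver K).

Lemma chart_map_local u s : s ^+ 2 = P.[u] ->
  exists F0 F1 F2 : {poly {poly algC}},
    [/\ over2 K F0, over2 K F1, over2 K F2, nz3 (ev3 F0 F1 F2 u s) &
        chart_rep F0 F1 F2].
Proof.
move=> hs; have [pu0 | pu0] := eqVneq p.[u] 0.
  exists (q%:P * 'X), W%:P, (p%:P * 'X); split; try exact: chart_rep_zero;
    try by apply: over2_polyOver; rewrite ?rpredM ?polyOverC ?polyOverX.
  by rewrite /nz3 /ev3 /= ev2C (negbTE (chart_zero hs pu0).1) andbF.
exists (q%:P * p%:P), (r%:P * 'X), (p%:P * p%:P); split; try exact: chart_rep_generic;
  try by apply: over2_polyOver; rewrite ?rpredM ?polyOverC ?polyOverX.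
by apply: nz3_z; rewrite /ev3 /= ev2M ev2C -expr2 expf_neq0.
Qed.

End ChartMap.

Ltac polyOver_closure := do ![apply: rpredD | apply: rpredM | apply: rpredX
  | apply: rpred1 | apply: polyOverX | rewrite polyOverC].

Section HyperellipticToWeierstrass.

Variables (a b : algC) (h : {poly algC}).
Hypothesis disc_neq0 : 4 * a ^+ 3 + 27 * b ^+ 2 != 0.
Hypothesis size_h : (2 < size h)%N.

Local Notation d := (size h).-1.
Local Notation H := (h + a%:P * h ^+ 3 + b%:P * h ^+ 4).
Local Notation m := (hyp_g H).+1.
Local Notation e := (2 * d - m)%N.

Lemma h_neq0 : h != 0.
Proof. by rewrite -size_poly_eq0 -lt0n (ltn_trans _ size_h). Qed.

Lemma size_hX n : size (h ^+ n) = (d * n).+1.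
Proof. by rewrite -(size_exp h n) prednK // lt0n size_poly_eq0 expf_neq0 ?h_neq0. Qed.

Lemma size_H : size H = (if b == 0 then d * 3 else d * 4).+1.
Proof.
have size_h1 : size h = d.+1 by rewrite prednK // (ltn_trans _ size_h).
have size_h13 : (size (h + a%:P * h ^+ 3)%R <= (d * 3).+1)%N.
  apply: leq_trans (size_polyD _ _) _.
  rewrite geq_max size_h1 ltnS leq_pmulr // mul_polyC.
  by rewrite (leq_trans (size_scale_leq _ _)) ?size_hX.
have [b0 | b0] := eqVneq b 0.
  have a0 : a != 0 by apply: contraNneq disc_neq0 => a0; rewrite a0 b0; apply/eqP; ring.
  rewrite b0 polyC0 mul0r addr0 addrC size_polyDl size_Cmul // size_hX //.
  by rewrite size_h1 ltnS; lia.
rewrite addrC size_polyDl size_Cmul // size_hX //.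
by apply: leq_ltn_trans size_h13 _; lia.
Qed.

Lemma hyp_g_H_bounds : [/\ (d <= m)%N, (m <= 2 * d)%N & (b != 0 -> m = 2 * d :> nat)].
Proof.
have d2 : (2 <= d)%N by rewrite -ltnS prednK // (ltn_trans _ size_h).
have := leq_size_hyp_g H; have := @leq_hyp_g_size H; rewrite size_H.
by case: eqP => _; split=> //; lia.
Qed.

Definition hrev : {poly algC} := \poly_(i < d.+1) h`_(d - i).

Lemma horner_hrev x : x != 0 -> hrev.[x] = x ^+ d * h.[x^-1].
Proof. by move=> x0; rewrite horner_rev // leqSpred. Qed.

Lemma hrev_root_neq0 x : hrev.[x] = 0 -> x != 0.
Proof.
move=> hx0; apply/eqP => x0; move: hx0; rewrite x0 horner_coef0 coef_poly subn0 /=.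
by apply/eqP; rewrite -/(lead_coef h) lead_coef_eq0 h_neq0.
Qed.

Definition hquot : {poly algC} := 1 + a%:P * h ^+ 2 + b%:P * h ^+ 3.

Lemma horner_H t : H.[t] = h.[t] * hquot.[t].
Proof. by rewrite /hquot !(hornerD, hornerCM, horner_exp, hornerC); ring. Qed.

Lemma affine_div u : h.[u] * hquot.[u] = 1.[u] * H.[u].
Proof. by rewrite hornerC mul1r horner_H. Qed.

Lemma affine_cubic u :
  1.[u] * hquot.[u] = 1.[u] ^+ 3 + a * 1.[u] * h.[u] ^+ 2 + b * h.[u] ^+ 3.
Proof. by rewrite /hquot !(hornerD, hornerCM, horner_exp, hornerC); ring. Qed.

Lemma affine_coprime u : h.[u] = 0 -> 1.[u] != 0.
Proof. by rewrite hornerC oner_eq0. Qed.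

(* Winf = X^-e (X^(3d) + a X^d hrev^2 + b hrev^3): if b != 0 then e = 0, and
   otherwise X^e divides X^d since e + (m - d) = d. *)
Definition Winf : {poly algC} :=
  'X^(m - d) * ('X^(2 * d) + a%:P * hrev ^+ 2) + b%:P * hrev ^+ 3.

Lemma infty_cubic x : ('X^e).[x] * Winf.[x] =
  ('X^d).[x] ^+ 3 + a * ('X^d).[x] * hrev.[x] ^+ 2 + b * hrev.[x] ^+ 3.
Proof.
have [d_le_m m_le_2d m_eq] := hyp_g_H_bounds.
have Xe_b : b * x ^+ e = b.
  by have [-> | /m_eq ->] := eqVneq b 0; rewrite ?mul0r // subnn mulr1.
have Xe_Xmd : x ^+ e * x ^+ (m - d)%N = x ^+ d by rewrite -exprD; congr (_ ^+ _); lia.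
have X2d : x ^+ (2 * d) = x ^+ d ^+ 2 by rewrite mulnC exprM.
rewrite /Winf !(hornerD, hornerCM, hornerM, hornerXn) X2d.
transitivity (x ^+ e * x ^+ (m - d)%N * (x ^+ d ^+ 2 + a * hrev.[x] ^+ 2) +
  b * x ^+ e * hrev.[x] ^+ 3); first by ring.
by rewrite Xe_Xmd Xe_b; ring.
Qed.

Lemma infty_div x : hrev.[x] * Winf.[x] = ('X^e).[x] * (hyp_rev H).[x].
Proof.
rewrite -!hornerM; congr (horner _ x); apply: poly_eq_horner_nonzero => {}x x0.
have Xe0 : ('X^e).[x] != 0 by rewrite hornerXn expf_neq0.
apply: (mulfI Xe0); rewrite !hornerM mulrCA infty_cubic horner_hyp_rev //.
have [_ m_le_2d _] := hyp_g_H_bounds.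
have X4d : x ^+ e * x ^+ e * x ^+ (m * 2) = x ^+ d ^+ 4.
  by rewrite -!exprD -exprM; congr (_ ^+ _); lia.
rewrite !hornerXn [in RHS]mulrA [in RHS]mulrA X4d horner_hrev //.
by rewrite !(hornerD, hornerCM, horner_exp); ring.
Qed.

Lemma infty_coprime x : hrev.[x] = 0 -> ('X^d).[x] != 0.
Proof. by move/hrev_root_neq0 => x0; rewrite hornerXn expf_neq0. Qed.

Definition hyp_phi (P : cpre) : pt3 :=
  if P.1 then chart_map hrev 'X^d 'X^e P.2.1 P.2.2 else chart_map h 1 1 P.2.1 P.2.2.

Lemma hyp_phi_onE P : onC H P -> nz3 (hyp_phi P) /\ onE a b (hyp_phi P).
Proof.
case: P => [[] [u s]]; rewrite /onC /hyp_phi /= => /eqP hs.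
  exact: (chart_map_onE infty_div infty_cubic hs).
exact: (chart_map_onE affine_div affine_cubic hs).
Qed.

Lemma hyp_phi_glue t s : t != 0 ->
  prop3 (hyp_phi (false, (t, s))) (hyp_phi (true, (t^-1, t ^- m * s))).
Proof.
move=> t0; have [_ m_le_2d _] := hyp_g_H_bounds.
rewrite /hyp_phi /chart_map /= horner_hrev ?invr_eq0 // invrK !hornerXn hornerC.
have [-> | ht] := eqVneq h.[t] 0.
  by rewrite mulr0 eqxx; exists 1; rewrite ?oner_eq0 // /pt_infty !mul1r.
rewrite mulf_eq0 expf_eq0 invr_eq0 (negbTE t0) (negbTE ht) andbF /=.
apply: (prop3_scale (c := t^-1 ^+ d * t^-1 ^+ d)) => /=.
- by rewrite mulf_neq0 ?expf_neq0 ?invr_eq0.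
- by rewrite mul1r mulrA.
- by rewrite mul1r mulrA -exprVn -!exprD subnK // addnn -mul2n.
- by rewrite exprMn expr2.
Qed.

Lemma hyp_phi_local (K : subringClosed algC) :
  a \in K -> b \in K -> h \is a polyOver K ->
  forall P, onC H P -> exists F0 F1 F2 : {poly {poly algC}},
    [/\ over2 K F0, over2 K F1, over2 K F2,
        nz3 (ev3 F0 F1 F2 P.2.1 P.2.2) &
        forall Q, onC H Q -> Q.1 = P.1 -> nz3 (ev3 F0 F1 F2 Q.2.1 Q.2.2) ->
          prop3 (ev3 F0 F1 F2 Q.2.1 Q.2.2) (hyp_phi Q)].
Proof.
move=> Ka Kb hK; have hrevK : hrev \is a polyOver K.
  by apply: polyOver_poly => i _; apply: (polyOverP hK).
case=> [[] [u s]]; rewrite /onC /= => /eqP hs.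
  have WinfK : Winf \is a polyOver K.
    by rewrite /Winf; polyOver_closure.
  have [F0 [F1 [F2 [K0 K1 K2 nzF repF]]]] := chart_map_local infty_div infty_cubic
    infty_coprime hrevK (polyOverXn _ d) (polyOverXn _ e) WinfK hs.
  exists F0, F1, F2; split => // [[[] [u' s']]] //; rewrite /onC /= => /eqP hs' _.
  exact: repF.
have hquotK : hquot \is a polyOver K.
  by rewrite /hquot; polyOver_closure.
have [F0 [F1 [F2 [K0 K1 K2 nzF repF]]]] := chart_map_local affine_div affine_cubic
  affine_coprime hK (rpred1 _) (rpred1 _) hquotK hs.
exists F0, F1, F2; split => // [[[] [u' s']]] //; rewrite /onC /= => /eqP hs' _.
exact: repF.
Qed.

Lemma hyp_phi_nonconstant : hyp_nonconstant H hyp_phi.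
Proof.
have [t0 /eqP ht0] : exists t, root h t.
  by apply/closed_rootP; rewrite gtn_eqF // ltnW.
have [t1 _ ht1] := poly_neq0_nonroot h_neq0.
exists (false, (t0, 0)), (false, (t1, sqrtC H.[t1])); split.
- by rewrite /onC /= horner_H ht0 mul0r expr0n.
- by rewrite /onC /= sqrtCK.
rewrite /hyp_phi /chart_map /= ht0 eqxx (negbTE ht1) => /prop3_infty_z /=.
by apply/eqP; rewrite expf_neq0.
Qed.

End HyperellipticToWeierstrass.

Lemma number_field_subring_closed (K : {pred algC}) :
  is_number_field K -> GRing.subring_closed K.
Proof. by case=> [[_ K1 KB KM _] _]; split. Qed.

Theorem lemma3p6 (K : {pred algC}) (a b : algC) (h : {poly algC}) :
  is_number_field K -> a \in K -> b \in K ->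
  4 * a ^+ 3 + 27 * b ^+ 2 != 0 ->
  h \is a polyOver K -> (2 < size h)%N ->
  let H := h + a%:P * h ^+ 3 + b%:P * h ^+ 4 in
  hyp_smooth H ->
  exists phi : cpre -> pt3, hyp_morphism_to_E K a b H phi /\ hyp_nonconstant H phi.
Proof.
move=> /number_field_subring_closed Kring Ka Kb disc hK size_h H _.
pose KS : subringClosed algC :=
  HB.pack_for (subringClosed algC) K (GRing.isSubringClosed.Build algC K Kring).
exists (hyp_phi a b h); split; first split.
- exact: hyp_phi_onE.
- by move=> t s _ _ _ t0 -> ->; exact: hyp_phi_glue.
- exact: (@hyp_phi_local a b h disc size_h KS).
- exact: hyp_phi_nonconstant.
Qed.
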